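(* Fix $\varepsilon>0$, let $k_n=e^{n^{2+\varepsilon}}$ and $C=6/\pi^2$, and let $X$ be the random variable with $\mathbb{P}(X=k_n)=\mathbb{P}(X=-k_n)=C/(2k_n^2n^2)$ for $n=1,2,\dots$ and $\mathbb{P}(X=0)=1-\sum_n C/(k_n^2n^2)$. Then $\mathbb{E}X=0$, $\operatorname{Var}(X)=1$, $\mathbb{E}\big[X^2(\log^+|X|)^{1/2}\big]=\infty$, and \[ \limsup_{n\to\infty}\frac{Q_n}{\sqrt{\log n}}=\infty,\qquad\text{where } Q_n=\sum_{k=1}^n\frac1k\Big(\sigma^2-\mathbb{E}\big[|X-\mu|^2\mathbf{1}_{\{|X-\mu|\le\sigma k\}}\big]\Big) \] with $\mu=0,\sigma=1$. In particular, for $f$ with $f''(\mu)\neq0$, $b_n-\tilde b_n\neq o(\sqrt{\log n})$, where $b_n=nf(\mu)+\frac{f''(\mu)}{2}\sum_{k=1}^n\frac1k\mathbb{E}[|X-\mu|^2\mathbf{1}_{\{|X-\mu|\le\sigma k\}}]$ and $\tilde b_n=nf(\mu)+\frac{f''(\mu)\sigma^2}{2}\log n$.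
   Context: $\log^+x=\log(x\vee1)$. *)

From Stdlib Require Import Reals Lra ClassicalEpsilon.
Open Scope R_scope.

Definition logplus (x : R) : R := ln (Rmax x 1).

Definition Cst : R := 6 / PI ^ 2.

Definition kk (eps : R) (n : nat) : R := exp (Rpower (INR n) (2 + eps)).

Definition patom (eps : R) (n : nat) : R := Cst / (2 * kk eps n ^ 2 * INR n ^ 2).

(* The distribution of X: atoms +-k_n (n >= 1) with mass patom eps n each,
   and atom 0 with mass p0.  Partial sums of E[g(X)]: the term of index m
   collects the atoms +-k_(m+1). *)
Definition expect_partial (eps p0 : R) (g : R -> R) (m : nat) : R :=
  p0 * g 0 + sum_f_R0 (fun i => patom eps (S i) * (g (kk eps (S i)) + g (- kk eps (S i)))) m.

Definition Integrable (eps p0 : R) (g : R -> R) : Prop :=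
  exists l, Un_cv (expect_partial eps p0 (fun x => Rabs (g x))) l.

(* limit of a real sequence (classical choice; meaningful when it converges) *)
Definition Lim (u : nat -> R) : R := epsilon (inhabits 0) (fun l => Un_cv u l).

(* E[g(X)] (meaningful when g(X) is integrable) *)
Definition Expect (eps p0 : R) (g : R -> R) : R := Lim (expect_partial eps p0 g).

(* E[g(X)] = +infinity, for nonnegative g *)
Definition ExpectInfinite (eps p0 : R) (g : R -> R) : Prop :=
  cv_infty (expect_partial eps p0 g).

Definition indic (b : Prop) : R := if excluded_middle_informative b then 1 else 0.

Definition mu0 : R := 0.
Definition sigma1 : R := 1.

Definition truncM2 (eps p0 : R) (k : nat) : R :=
  Expect eps p0 (fun x => Rabs (x - mu0) ^ 2 * indic (Rabs (x - mu0) <= sigma1 * INR k)).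

Definition Qn (eps p0 : R) (n : nat) : R :=
  sum_f_R0 (fun i => / INR (S i) * (sigma1 ^ 2 - truncM2 eps p0 (S i))) (pred n).
(* for n >= 1 this is sum_{k=1}^n; Qn 0 = Qn 1 is irrelevant for limits *)

Definition bn (eps p0 f0 f2 : R) (n : nat) : R :=
  INR n * f0 + f2 / 2 * sum_f_R0 (fun i => / INR (S i) * truncM2 eps p0 (S i)) (pred n).

Definition btn (f0 f2 : R) (n : nat) : R :=
  INR n * f0 + f2 * sigma1 ^ 2 / 2 * ln (INR n).

(* X is symmetric, so E X = 0, and each pair of atoms +-k_n carries C / n^2 of
   the second moment, so Var X = C * zeta(2) = 1 by the Basel identity (via
   Cauchy's cosecant argument).  Since log k_n = n^(2+eps) >= n^2, the
   same pair contributes at least C / n to E[X^2 (log^+ |X|)^(1/2)], which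
   therefore diverges like the harmonic series.  For k <= N the truncated second
   moment only sees the atoms with k_n <= N, i.e. n <= T := (log N)^(1/(2+eps)),
   so it misses at least the tail sum_(n > T) C / n^2 >= C / (2 (T + 1)); hence
   Q_N >= C log N / (2 (T + 1)), which is of order (log N)^(1 - 1/(2+eps)), much
   larger than sqrt(log N).  Finally b_n - b~_n = f''(mu)/2 (H_n - log n - Q_n)
   with H_n - log n bounded. *)

From Stdlib Require Import Reals Lra Lia ZArith ClassicalEpsilon.
Open Scope R_scope.

Fixpoint rsum (g : nat -> R) (n : nat) : R :=
  match n with O => 0 | S n' => rsum g n' + g n' end.

Lemma rsumS g n : rsum g (S n) = rsum g n + g n.
Proof. reflexivity. Qed.

Lemma eq_rsum g h n : (forall j, (j < n)%nat -> g j = h j) -> rsum g n = rsum h n.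
Proof.
induction n as [|n IH]; intros Hgh; [reflexivity|].
rewrite !rsumS, IH, (Hgh n) by first [lia | intros; apply Hgh; lia]; reflexivity.
Qed.

Lemma rsumD g h n : rsum (fun j => g j + h j) n = rsum g n + rsum h n.
Proof. induction n as [|n IH]; [simpl; ring|]. rewrite !rsumS, IH; ring. Qed.

Lemma rsumZ c g n : rsum (fun j => c * g j) n = c * rsum g n.
Proof. induction n as [|n IH]; [simpl; ring|]. rewrite !rsumS, IH; ring. Qed.

Lemma rsum_const c n : rsum (fun _ => c) n = INR n * c.
Proof. induction n as [|n IH]; [simpl; ring|]. rewrite rsumS, IH, S_INR; ring. Qed.

Lemma rsum_split g a b : rsum g (a + b) = rsum g a + rsum (fun j => g (a + j)%nat) b.
Proof.
induction b as [|b IH]; [rewrite Nat.add_0_r; simpl; ring|].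
rewrite Nat.add_succ_r, !rsumS, IH; ring.
Qed.

Lemma rsum_recl g n : rsum g (S n) = g 0%nat + rsum (fun j => g (S j)) n.
Proof. induction n as [|n IH]; [simpl; ring|]. rewrite rsumS, IH, rsumS; ring. Qed.

Lemma rsum_rev g n : rsum g n = rsum (fun j => g (n - 1 - j)%nat) n.
Proof.
induction n as [|n IH]; [reflexivity|].
rewrite rsumS, IH, rsum_recl, Nat.sub_0_r, Nat.sub_succ, Nat.sub_0_r, Rplus_comm.
f_equal; apply eq_rsum; intros j _; f_equal; lia.
Qed.

Lemma rsum_pairs g m : rsum g (2 * m) = rsum (fun j => g (2 * j)%nat + g (2 * j + 1)%nat) m.
Proof.
induction m as [|m IH]; [reflexivity|].
replace (2 * S m)%nat with (S (S (2 * m))) by lia.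
rewrite !rsumS, IH, Nat.add_1_r; ring.
Qed.

Lemma le_rsum g h n : (forall j, (j < n)%nat -> g j <= h j) -> rsum g n <= rsum h n.
Proof.
induction n as [|n IH]; intros Hgh; [simpl; lra|]. rewrite !rsumS.
assert (rsum g n <= rsum h n) by (apply IH; intros; apply Hgh; lia).
assert (g n <= h n) by (apply Hgh; lia). lra.
Qed.

Lemma rsum_ge0 g n : (forall j, 0 <= g j) -> 0 <= rsum g n.
Proof.
intros Hg. rewrite <- (Rmult_0_r (INR n)), <- rsum_const.
apply le_rsum; auto.
Qed.

Lemma rsum_le_trunc (t u : nat -> R) j M :
  (forall i, 0 <= t i <= u i) -> (forall i, (j <= i)%nat -> t i = 0) -> rsum t M <= rsum u j.
Proof.
intros Htu Ht0.
destruct (Nat.le_gt_cases M j) as [HMj|HjM].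
- replace j with (M + (j - M))%nat by lia. rewrite rsum_split.
  assert (rsum t M <= rsum u M) by (apply le_rsum; intros i _; apply Htu).
  assert (0 <= rsum (fun i => u (M + i)%nat) (j - M)).
  { apply rsum_ge0; intros i; destruct (Htu (M + i)%nat); lra. }
  lra.
- replace M with (j + (M - j))%nat by lia. rewrite rsum_split.
  rewrite (eq_rsum (fun i => t (j + i)%nat) (fun _ => 0)) by (intros; apply Ht0; lia).
  rewrite rsum_const, Rmult_0_r, Rplus_0_r.
  apply le_rsum; intros i _; apply Htu.
Qed.

Lemma sum_f_R0_rsum g n : sum_f_R0 g n = rsum g (S n).
Proof. induction n as [|n IH]; [simpl; ring|]. simpl sum_f_R0. rewrite IH. reflexivity. Qed.

Lemma Un_cv_const c : Un_cv (fun _ => c) c.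
Proof. intros e He. exists 0%nat. intros. unfold Rdist. rewrite Rminus_diag, Rabs_R0. lra. Qed.

Lemma Un_cv_subseq u l (phi : nat -> nat) :
  (forall n, (n <= phi n)%nat) -> Un_cv u l -> Un_cv (fun n => u (phi n)) l.
Proof.
intros Hphi H e He. destruct (H e He) as [N HN].
exists N. intros n Hn. apply HN. specialize (Hphi n). lia.
Qed.

Lemma Un_cv_of_dist_le u v l :
  (forall n, Rabs (u n - l) <= v n) -> Un_cv v 0 -> Un_cv u l.
Proof.
intros Huv Hv e He. destruct (Hv e He) as [N HN].
exists N. intros n Hn. specialize (HN n Hn). unfold Rdist in *.
rewrite Rminus_0_r in HN. specialize (Huv n).
assert (Rabs (v n) >= v n) by apply Rle_ge, Rle_abs. lra.
Qed.

Lemma Lim_cv u l : Un_cv u l -> Lim u = l.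
Proof.
intros H. apply UL_sequence with u; auto.
apply (epsilon_spec (inhabits 0) (fun l => Un_cv u l)). exists l; auto.
Qed.

Definition csc2 (x : R) : R := / sin x ^ 2.

Lemma csc2_double y : sin y <> 0 -> cos y <> 0 ->
  csc2 (2 * y) = / 4 * (csc2 y + / cos y ^ 2).
Proof.
intros Hs Hc. unfold csc2. rewrite sin_2a.
assert (E := sin2_cos2 y). unfold Rsqr in E.
field_simplify; auto. field_simplify; auto.
rewrite <- E at 1. field; auto.
Qed.

Lemma INR_pow2 N : INR (2 ^ N) = 2 ^ N.
Proof. rewrite pow_INR. reflexivity. Qed.

Definition odd_angle (N j : nat) : R := (2 * INR j + 1) * PI / 2 ^ (S N).

Lemma odd_angle_S N j : odd_angle N j = 2 * odd_angle (S N) j.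
Proof. unfold odd_angle. simpl pow. field. apply pow_nonzero. lra. Qed.

Lemma odd_angle_range N j : (j < 2 ^ N)%nat -> 0 < odd_angle (S N) j < PI / 2.
Proof.
intros Hj. unfold odd_angle.
assert (P := PI_RGT_0). assert (Q := pow_lt 2 N ltac:(lra)).
assert (INR (S j) <= INR (2 ^ N)) by (apply le_INR; lia).
rewrite S_INR, INR_pow2 in H.
assert (0 <= INR j) by apply pos_INR.
simpl pow. split.
- apply Rdiv_lt_0_compat; nra.
- apply Rmult_lt_reg_r with (2 * (2 * 2 ^ N)); [lra|].
  field_simplify; [|lra]. nra.
Qed.

Lemma odd_angle_shift N j : odd_angle (S N) (2 ^ N + j) = odd_angle (S N) j + PI / 2.
Proof.
unfold odd_angle. rewrite plus_INR, INR_pow2. simpl pow.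
field. apply pow_nonzero; lra.
Qed.

Lemma odd_angle_rev N j : (j < 2 ^ N)%nat ->
  odd_angle (S N) (2 ^ N - 1 - j) = PI / 2 - odd_angle (S N) j.
Proof.
intros Hj. replace (2 ^ N - 1 - j)%nat with (2 ^ N - S j)%nat by lia.
unfold odd_angle. rewrite minus_INR by lia. rewrite S_INR, INR_pow2. simpl pow.
field. apply pow_nonzero; lra.
Qed.

(* The angles of level N+1 come in pairs y, y + pi/2 whose doubles are the
   angles of level N, and csc2 y + csc2 (y + pi/2) = 4 csc2 (2 y). *)
Lemma sum_csc2_odd_angle N : rsum (fun j => csc2 (odd_angle N j)) (2 ^ N) = 2 ^ N * 2 ^ N.
Proof.
induction N as [|N IH].
- simpl. unfold csc2, odd_angle. simpl.
  replace ((2 * 0 + 1) * PI / (2 * 1)) with (PI / 2) by field.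
  rewrite sin_PI2. field.
- replace (2 ^ S N)%nat with (2 ^ N + 2 ^ N)%nat by (simpl; lia). rewrite rsum_split.
  transitivity (rsum (fun j => 4 * csc2 (odd_angle N j)) (2 ^ N)).
  + rewrite <- rsumD. apply eq_rsum. intros j Hj.
    rewrite odd_angle_shift. destruct (odd_angle_range N j Hj) as [H1 H2].
    assert (0 < sin (odd_angle (S N) j)) by (apply sin_gt_0; lra).
    assert (0 < cos (odd_angle (S N) j)) by (apply cos_gt_0; lra).
    rewrite (odd_angle_S N j), csc2_double by lra.
    unfold csc2 at 2. rewrite sin_plus, sin_PI2, cos_PI2.
    field. lra.
  + rewrite rsumZ, IH. simpl. ring.
Qed.

(* The second half of the angles of level N+1 reflects the first half by y |-> pi - y. *)
Lemma sum_csc2_odd_angle_half N :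
  rsum (fun j => csc2 (odd_angle (S N) j)) (2 ^ N) = 2 * (2 ^ N * 2 ^ N).
Proof.
assert (E := sum_csc2_odd_angle (S N)).
replace (2 ^ S N)%nat with (2 ^ N + 2 ^ N)%nat in E by (simpl; lia).
rewrite rsum_split in E.
assert (Esym : rsum (fun j => csc2 (odd_angle (S N) (2 ^ N + j))) (2 ^ N)
             = rsum (fun j => csc2 (odd_angle (S N) j)) (2 ^ N)).
{ rewrite rsum_rev. apply eq_rsum. intros j Hj.
  rewrite odd_angle_shift, odd_angle_rev by lia.
  replace (PI / 2 - odd_angle (S N) j + PI / 2) with (PI - odd_angle (S N) j) by lra.
  unfold csc2. rewrite sin_PI_x. reflexivity. }
rewrite Esym in E. simpl pow in E. lra.
Qed.

Lemma tan_ge_id y : 0 < y < PI / 2 -> y <= tan y.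
Proof.
intros [H1 H2].
destruct (MVT_cor2 tan (fun c => 1 + tan c ^ 2) 0 y H1) as [c [Hc1 Hc2]].
- intros c Hc. assert (Hr : - PI / 2 < c < PI / 2) by lra.
  assert (E := derive_pt_tan c Hr). unfold derive_pt in E. rewrite <- E.
  apply (proj2_sig (derivable_pt_tan c Hr)).
- rewrite tan_0 in Hc1. assert (0 <= tan c ^ 2) by apply pow2_ge_0. nra.
Qed.

Lemma inv_sq_between_csc2 y : 0 < y < PI / 2 -> csc2 y - 1 <= / y ^ 2 <= csc2 y.
Proof.
intros [H1 H2]. assert (P := PI_RGT_0).
assert (Hs : 0 < sin y) by (apply sin_gt_0; lra).
assert (Hc : 0 < cos y) by (apply cos_gt_0; lra).
assert (Hsin := sin_lt_x y H1). assert (Htan := tan_ge_id y (conj H1 H2)).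
split.
- assert (E : csc2 y - 1 = / tan y ^ 2).
  { assert (E := sin2_cos2 y). unfold Rsqr in E. unfold csc2, tan.
    replace (/ (sin y / cos y) ^ 2) with (cos y ^ 2 / sin y ^ 2) by (field; lra).
    replace (cos y ^ 2) with (1 - sin y ^ 2) by (simpl; lra).
    field. lra. }
  rewrite E. apply Rinv_le_contravar; [nra|]. assert (0 < tan y) by lra. nra.
- unfold csc2. apply Rinv_le_contravar; nra.
Qed.

Definition inv_sq_sum (n : nat) : R := rsum (fun i => / (INR i + 1) ^ 2) n.
Definition odd_inv_sq_sum (n : nat) : R := rsum (fun j => / (2 * INR j + 1) ^ 2) n.

Lemma odd_inv_sq_sum_pow2 N :
  PI ^ 2 / 8 - PI ^ 2 / 16 / 2 ^ N <= odd_inv_sq_sum (2 ^ N) <= PI ^ 2 / 8.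
Proof.
assert (P := PI_RGT_0).
set (m := 2 ^ N). assert (Hm : 0 < m) by (apply pow_lt; lra).
set (c := 16 * m * m / PI ^ 2).
assert (Hc : 0 < c) by (apply Rdiv_lt_0_compat; [nra | apply pow_lt; lra]).
assert (Escale : rsum (fun j => / odd_angle (S N) j ^ 2) (2 ^ N) = c * odd_inv_sq_sum (2 ^ N)).
{ unfold odd_inv_sq_sum. rewrite <- rsumZ. apply eq_rsum. intros j _.
  unfold odd_angle, c, m. simpl pow. assert (0 <= INR j) by apply pos_INR.
  field. repeat split; [lra | lra | apply pow_nonzero; lra]. }
assert (Hup : rsum (fun j => / odd_angle (S N) j ^ 2) (2 ^ N)
              <= rsum (fun j => csc2 (odd_angle (S N) j)) (2 ^ N)).
{ apply le_rsum. intros j Hj. apply inv_sq_between_csc2, odd_angle_range, Hj. }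
assert (Hlow : rsum (fun j => csc2 (odd_angle (S N) j) + - 1) (2 ^ N)
               <= rsum (fun j => / odd_angle (S N) j ^ 2) (2 ^ N)).
{ apply le_rsum. intros j Hj. apply inv_sq_between_csc2, odd_angle_range, Hj. }
rewrite rsumD, rsum_const, INR_pow2, sum_csc2_odd_angle_half in Hlow.
rewrite sum_csc2_odd_angle_half in Hup.
rewrite Escale in Hup, Hlow. fold m in Hup, Hlow.
split; apply Rmult_le_reg_l with c; auto.
- replace (c * (PI ^ 2 / 8 - PI ^ 2 / 16 / m)) with (2 * (m * m) - m)
    by (unfold c; field; split; lra).
  lra.
- replace (c * (PI ^ 2 / 8)) with (2 * (m * m)) by (unfold c; field; lra). lra.
Qed.

Lemma inv_sq_sum_double m : inv_sq_sum (2 * m) = odd_inv_sq_sum m + / 4 * inv_sq_sum m.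
Proof.
unfold inv_sq_sum, odd_inv_sq_sum. rewrite rsum_pairs, <- rsumZ, <- rsumD.
apply eq_rsum. intros j _. rewrite plus_INR, !mult_INR. simpl INR.
assert (0 <= INR j) by apply pos_INR. field. lra.
Qed.

Lemma inv_sq_sum_growing : Un_growing inv_sq_sum.
Proof.
intros n. unfold inv_sq_sum. rewrite rsumS. assert (0 <= INR n) by apply pos_INR.
assert (0 < / (INR n + 1) ^ 2) by (apply Rinv_0_lt_compat; nra). lra.
Qed.

Lemma inv_sq_ge_telescope p : 0 <= p -> / (p + 1) - / (p + 2) <= / (p + 1) ^ 2.
Proof.
intros Hp. replace (/ (p + 1) - / (p + 2)) with (/ ((p + 1) * (p + 2))) by (field; lra).
apply Rinv_le_contravar; nra.
Qed.

Lemma inv_sq_sum_le_2 n : inv_sq_sum n <= 2.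
Proof.
assert (Hstrong : forall n, inv_sq_sum (S n) <= 2 - / (INR n + 1)).
{ induction n0 as [|n0 IH]; [unfold inv_sq_sum; simpl; lra|].
  unfold inv_sq_sum in *. rewrite rsumS, S_INR. assert (0 <= INR n0) by apply pos_INR.
  assert (/ (INR n0 + 1 + 1) ^ 2 <= / (INR n0 + 1) - / (INR n0 + 1 + 1)).
  { replace (/ (INR n0 + 1) - / (INR n0 + 1 + 1)) with (/ ((INR n0 + 1) * (INR n0 + 1 + 1)))
      by (field; lra).
    apply Rinv_le_contravar; nra. }
  lra. }
destruct n as [|n]; [unfold inv_sq_sum; simpl; lra|].
specialize (Hstrong n). assert (0 <= INR n) by apply pos_INR.
assert (0 < / (INR n + 1)) by (apply Rinv_0_lt_compat; lra). lra.
Qed.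

(* The even-indexed terms contribute a quarter of the sum, so the limit L
   satisfies L - L / 4 = lim odd_inv_sq_sum = pi^2 / 8. *)
Lemma cv_inv_sq_sum : Un_cv inv_sq_sum (PI ^ 2 / 6).
Proof.
destruct (growing_cv inv_sq_sum inv_sq_sum_growing) as [L HL].
{ exists 2. intros x [n ->]. apply inv_sq_sum_le_2. }
assert (Hpow2 : forall n, (n <= 2 ^ n)%nat).
{ intros n. apply Nat.lt_le_incl, Nat.pow_gt_lin_r; lia. }
assert (H1 : Un_cv (fun N => inv_sq_sum (2 * 2 ^ N) - / 4 * inv_sq_sum (2 ^ N)) (L - / 4 * L)).
{ apply CV_minus; [|apply CV_mult; [apply Un_cv_const|]];
    apply (Un_cv_subseq inv_sq_sum); auto; intros n; specialize (Hpow2 n); lia. }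
assert (H2 : Un_cv (fun N => inv_sq_sum (2 * 2 ^ N) - / 4 * inv_sq_sum (2 ^ N)) (PI ^ 2 / 8)).
{ apply Un_cv_of_dist_le with (v := fun N => PI ^ 2 / 16 / 2 ^ N); [|apply cv_pow_half].
  intros N. rewrite inv_sq_sum_double.
  destruct (odd_inv_sq_sum_pow2 N) as [B1 B2].
  rewrite Rabs_left1; lra. }
assert (L - / 4 * L = PI ^ 2 / 8) by (eapply UL_sequence; eauto).
replace (PI ^ 2 / 6) with L by lra. exact HL.
Qed.

Lemma inv_sq_sum_add_tail_le j : inv_sq_sum j + / (2 * (INR j + 1)) <= PI ^ 2 / 6.
Proof.
assert (Htel : forall m, inv_sq_sum j + / (INR j + 1) - / (INR (j + m) + 1) <= inv_sq_sum (j + m)).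
{ induction m as [|m IH]; [rewrite Nat.add_0_r; lra|].
  rewrite Nat.add_succ_r. unfold inv_sq_sum in *. rewrite rsumS, S_INR.
  assert (T := inv_sq_ge_telescope (INR (j + m)) (pos_INR _)).
  replace (INR (j + m) + 1 + 1) with (INR (j + m) + 2) by ring. lra. }
specialize (Htel (S j)). rewrite plus_INR, S_INR in Htel.
assert (0 <= INR j) by apply pos_INR.
assert (G := growing_ineq _ _ inv_sq_sum_growing cv_inv_sq_sum (j + S j)).
replace (/ (2 * (INR j + 1))) with (/ (INR j + 1) - / (INR j + (INR j + 1) + 1)) by (field; lra).
lra.
Qed.

Lemma ln_le_sub1 y : 0 < y -> ln y <= y - 1.
Proof.
intros Hy. destruct (Rle_or_lt (ln y) (y - 1)) as [h|h]; auto.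
apply exp_increasing in h. rewrite exp_ln in h by lra.
assert (T := exp_ineq1_le (y - 1)). lra.
Qed.

Lemma ln_sub_le a b : 0 < a -> 0 < b -> ln a - ln b <= a / b - 1.
Proof.
intros Ha Hb. replace a with (b * (a / b)) at 1 by (field; lra).
rewrite ln_mult by (try apply Rdiv_lt_0_compat; lra).
assert (T := ln_le_sub1 (a / b) ltac:(apply Rdiv_lt_0_compat; lra)). lra.
Qed.

Lemma ln_le a b : 0 < a -> a <= b -> ln a <= ln b.
Proof. intros Ha Hab. destruct (Req_dec a b); [subst; lra|]. left; apply ln_increasing; lra. Qed.

Definition harmonic (m : nat) : R := sum_f_R0 (fun i => / INR (S i)) m.

Lemma ln_le_harmonic m : ln (INR m + 2) <= harmonic m.
Proof.
unfold harmonic. induction m as [|m IH].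
- simpl. replace (0 + 2) with 2 by ring.
  assert (T := ln_sub_le 2 1 ltac:(lra) ltac:(lra)). rewrite ln_1 in T. lra.
- cbn [sum_f_R0]. assert (0 <= INR m) by apply pos_INR.
  assert (T := ln_sub_le (INR m + 1 + 2) (INR m + 2) ltac:(lra) ltac:(lra)).
  replace (/ INR (S (S m))) with ((INR m + 1 + 2) / (INR m + 2) - 1) by (rewrite !S_INR; field; lra).
  rewrite S_INR. lra.
Qed.

Lemma harmonic_le m : harmonic m <= 1 + ln (INR m + 1).
Proof.
unfold harmonic. induction m as [|m IH].
- simpl. replace (0 + 1) with 1 by ring. rewrite ln_1. lra.
- cbn [sum_f_R0]. assert (0 <= INR m) by apply pos_INR.
  assert (T := ln_sub_le (INR m + 1) (INR m + 1 + 1) ltac:(lra) ltac:(lra)).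
  replace (/ INR (S (S m))) with (1 - (INR m + 1) / (INR m + 1 + 1)) by (rewrite !S_INR; field; lra).
  rewrite S_INR. lra.
Qed.

Lemma Cst_pos : 0 < Cst.
Proof. unfold Cst. assert (P := PI_RGT_0). apply Rdiv_lt_0_compat; [lra | apply pow_lt; lra]. Qed.

Lemma Cst_PI2 : Cst * (PI ^ 2 / 6) = 1.
Proof. unfold Cst. assert (P := PI_RGT_0). field. lra. Qed.

Lemma INR_S_pos i : 0 < INR (S i).
Proof. apply lt_0_INR. lia. Qed.

Lemma Cst_inv_sq_pos i : 0 < Cst / INR (S i) ^ 2.
Proof. apply Rdiv_lt_0_compat; [apply Cst_pos | apply pow_lt, INR_S_pos]. Qed.

Lemma cv_Cst_inv_sq_series : Un_cv (sum_f_R0 (fun i => Cst / INR (S i) ^ 2)) 1.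
Proof.
rewrite <- Cst_PI2.
apply Un_cv_ext with (un := fun n => Cst * inv_sq_sum (S n)).
- intros n. rewrite sum_f_R0_rsum. unfold inv_sq_sum. rewrite <- rsumZ.
  apply eq_rsum. intros i _. rewrite S_INR. reflexivity.
- apply CV_mult; [apply Un_cv_const|].
  apply (Un_cv_subseq inv_sq_sum (PI ^ 2 / 6) S); [auto | apply cv_inv_sq_sum].
Qed.

Lemma Cst_inv_sq_sum_add_tail_le j : Cst * inv_sq_sum j + Cst / (2 * (INR j + 1)) <= 1.
Proof.
rewrite <- Cst_PI2 at 2.
replace (Cst * inv_sq_sum j + Cst / (2 * (INR j + 1)))
  with (Cst * (inv_sq_sum j + / (2 * (INR j + 1)))) by (unfold Rdiv; ring).
apply Rmult_le_compat_l; [apply Rlt_le, Cst_pos | apply inv_sq_sum_add_tail_le].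
Qed.

Lemma cv_Cst_inv_sq_weighted (w : nat -> R) : (forall i, 0 <= w i <= 1) ->
  {l | Un_cv (sum_f_R0 (fun i => Cst / INR (S i) ^ 2 * w i)) l}.
Proof.
intros Hw. apply Rseries_CV_comp with (Bn := fun i => Cst / INR (S i) ^ 2).
- intros i. specialize (Hw i). assert (T := Cst_inv_sq_pos i). nra.
- exists 1. apply cv_Cst_inv_sq_series.
Qed.

Lemma nat_floor x : 0 <= x -> exists j, INR j <= x < INR j + 1.
Proof.
intros Hx. destruct (archimed x) as [H1 H2].
assert (0 < IZR (up x)) by lra. apply lt_0_IZR in H.
exists (Z.to_nat (up x - 1)). rewrite INR_IZR_INZ, Z2Nat.id by lia.
rewrite minus_IZR. simpl. lra.
Qed.

Lemma Rpower_ln_unbounded a M N : 0 < a -> exists n, (N <= n)%nat /\ M < Rpower (ln (INR n)) a.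
Proof.
intros Ha. set (U := Rpower (Rmax M 1) (/ a)).
assert (HU : 0 < U) by apply exp_pos.
destruct (INR_unbounded (Rmax (exp U) (INR N))) as [n Hn].
assert (HnU : exp U < INR n) by (assert (T := Rmax_l (exp U) (INR N)); lra).
assert (HnN : INR N < INR n) by (assert (T := Rmax_r (exp U) (INR N)); lra).
exists n. split; [apply INR_lt in HnN; lia|].
assert (Hln : U < ln (INR n)).
{ rewrite <- (ln_exp U). apply ln_increasing; [apply exp_pos | exact HnU]. }
assert (Hpow : Rpower U a < Rpower (ln (INR n)) a) by (apply Rlt_Rpower_l; lra).
assert (HM : 0 < Rmax M 1) by (apply (Rlt_le_trans _ 1); [lra | apply Rmax_r]).
unfold U in Hpow. rewrite Rpower_mult, Rinv_l, Rpower_1 in Hpow by lra.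
assert (T := Rmax_l M 1). lra.
Qed.

Lemma indic_false (P : Prop) : ~ P -> indic P = 0.
Proof. intros H. unfold indic. destruct (excluded_middle_informative P); tauto. Qed.

Lemma indic_bounds (P : Prop) : 0 <= indic P <= 1.
Proof. unfold indic. destruct (excluded_middle_informative P); lra. Qed.

Lemma ln_kk eps n : ln (kk eps n) = Rpower (INR n) (2 + eps).
Proof. apply ln_exp. Qed.

Lemma kk_gt1 eps n : 1 < kk eps n.
Proof. unfold kk. rewrite <- exp_0. apply exp_increasing, exp_pos. Qed.

Section Distribution.

Variable eps : R.
Hypothesis eps_gt0 : 0 < eps.

Lemma sq_le_ln_kk i : INR (S i) ^ 2 <= ln (kk eps (S i)).
Proof.
rewrite ln_kk, <- Rpower_pow by apply INR_S_pos.
apply Rle_Rpower; [|simpl INR; lra].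
rewrite S_INR. assert (0 <= INR i) by apply pos_INR. lra.
Qed.


Lemma patom_mass i : patom eps (S i) * (2 * kk eps (S i) ^ 2) = Cst / INR (S i) ^ 2.
Proof.
unfold patom. assert (T := kk_gt1 eps (S i)). assert (T2 := INR_S_pos i).
field. lra.
Qed.

Lemma expect_partial_even p0 g m : (forall x, g (- x) = g x) ->
  expect_partial eps p0 g m = p0 * g 0 +
    sum_f_R0 (fun i => Cst / INR (S i) ^ 2 * (g (kk eps (S i)) / kk eps (S i) ^ 2)) m.
Proof.
intros Heven. unfold expect_partial. f_equal. apply sum_eq. intros i _.
rewrite Heven, <- patom_mass. assert (T := kk_gt1 eps (S i)). field. lra.
Qed.

Lemma p0_ge0 p0 :
  infinite_sum (fun i => Cst / (kk eps (S i) ^ 2 * INR (S i) ^ 2)) (1 - p0) -> 0 <= p0.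
Proof.
intros Hp0.
assert (1 - p0 <= 1); [|lra].
eapply Rle_cv_lim; [| exact Hp0 | exact cv_Cst_inv_sq_series].
intros n. apply sum_Rle. intros i _.
assert (T := kk_gt1 eps (S i)). assert (T2 := Cst_inv_sq_pos i). assert (T3 := INR_S_pos i).
replace (Cst / (kk eps (S i) ^ 2 * INR (S i) ^ 2))
  with (Cst / INR (S i) ^ 2 * / kk eps (S i) ^ 2) by (field; lra).
assert (/ kk eps (S i) ^ 2 <= 1) by (rewrite <- Rinv_1; apply Rinv_le_contravar; nra).
nra.
Qed.

Lemma integrable_id p0 : Integrable eps p0 (fun x => x).
Proof.
destruct (cv_Cst_inv_sq_weighted (fun i => / kk eps (S i))) as [l Hl].
{ intros i. assert (T := kk_gt1 eps (S i)). split.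
  - left; apply Rinv_0_lt_compat; lra.
  - rewrite <- Rinv_1. apply Rinv_le_contravar; lra. }
exists (p0 * Rabs 0 + l).
apply Un_cv_ext with (un := fun m => p0 * Rabs 0 +
  sum_f_R0 (fun i => Cst / INR (S i) ^ 2 * / kk eps (S i)) m).
- intros m. rewrite expect_partial_even by (intros; apply Rabs_Ropp). f_equal.
  apply sum_eq. intros i _. assert (T := kk_gt1 eps (S i)).
  rewrite Rabs_pos_eq by lra. assert (T2 := INR_S_pos i). field. split; lra.
- apply CV_plus; [apply Un_cv_const | exact Hl].
Qed.

Lemma Expect_id p0 : Expect eps p0 (fun x => x) = 0.
Proof.
apply Lim_cv, Un_cv_ext with (un := fun _ => 0); [|apply Un_cv_const].
intros m. unfold expect_partial. rewrite (sum_eq _ (fun _ => 0)) by (intros; ring).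
rewrite sum_cte. ring.
Qed.

Lemma cv_expect_partial_sq p0 g : (forall x, g x = x ^ 2) -> Un_cv (expect_partial eps p0 g) 1.
Proof.
intros Hg.
apply Un_cv_ext with (un := fun m => 0 + sum_f_R0 (fun i => Cst / INR (S i) ^ 2) m).
- intros m. rewrite expect_partial_even by (intros; rewrite !Hg; ring).
  rewrite Hg. f_equal; [ring|]. apply sum_eq. intros i _.
  rewrite Hg. assert (T := kk_gt1 eps (S i)). assert (T2 := INR_S_pos i). field. split; lra.
- replace 1 with (0 + 1) by ring. apply CV_plus; [apply Un_cv_const | apply cv_Cst_inv_sq_series].
Qed.

Lemma harmonic_le_expect_partial_sq_sqrt_logplus p0 m :
  Cst * harmonic m <= expect_partial eps p0 (fun x => x ^ 2 * sqrt (logplus (Rabs x))) m.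
Proof.
rewrite expect_partial_even by (intros; rewrite Rabs_Ropp; ring).
unfold harmonic. rewrite scal_sum.
replace (0 ^ 2) with 0 by ring. rewrite Rmult_0_l, Rmult_0_r, Rplus_0_l.
apply sum_Rle. intros i _.
assert (T := kk_gt1 eps (S i)). assert (T2 := INR_S_pos i).
rewrite Rabs_pos_eq by lra. unfold logplus. rewrite Rmax_left by lra.
assert (Hsqrt : INR (S i) <= sqrt (ln (kk eps (S i)))).
{ rewrite <- (sqrt_pow2 (INR (S i))) by lra. apply sqrt_le_1_alt, sq_le_ln_kk. }
replace (kk eps (S i) ^ 2 * sqrt (ln (kk eps (S i))) / kk eps (S i) ^ 2)
  with (sqrt (ln (kk eps (S i)))) by (field; lra).
replace (/ INR (S i) * Cst) with (Cst / INR (S i) ^ 2 * INR (S i)) by (field; lra).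
apply Rmult_le_compat_l; [apply Rlt_le, Cst_inv_sq_pos | exact Hsqrt].
Qed.

Lemma ExpectInfinite_sq_sqrt_logplus p0 :
  ExpectInfinite eps p0 (fun x => x ^ 2 * sqrt (logplus (Rabs x))).
Proof.
intros M. assert (C := Cst_pos).
destruct (INR_unbounded (exp (M / Cst))) as [N HN].
exists N. intros n Hn.
assert (HM : M / Cst < ln (INR n + 2)).
{ rewrite <- (ln_exp (M / Cst)). apply ln_increasing; [apply exp_pos|].
  apply le_INR in Hn. lra. }
assert (T := ln_le_harmonic n). assert (T2 := harmonic_le_expect_partial_sq_sqrt_logplus p0 n).
apply Rmult_lt_compat_l with (r := Cst) in HM; [|exact C].
replace (Cst * (M / Cst)) with M in HM by (field; lra). nra.
Qed.

Definition kk_inv (x : R) : R := Rpower (ln x) (/ (2 + eps)).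

Lemma kk_inv_pos x : 0 < kk_inv x.
Proof. apply exp_pos. Qed.

Lemma lt_kk_of_kk_inv_lt x n : 1 < x -> kk_inv x < INR n -> x < kk eps n.
Proof.
intros Hx Hn. assert (Hlnx : 0 < ln x) by (rewrite <- ln_1; apply ln_increasing; lra).
apply ln_lt_inv; [lra | unfold kk; apply exp_pos |].
assert (Hpow : Rpower (kk_inv x) (2 + eps) < Rpower (INR n) (2 + eps)).
{ apply Rlt_Rpower_l; [lra | split; [apply kk_inv_pos | exact Hn]]. }
unfold kk_inv in Hpow. rewrite Rpower_mult, Rinv_l, Rpower_1 in Hpow by lra.
rewrite ln_kk. exact Hpow.
Qed.

Lemma truncM2_le_partial p0 k j : (forall i, (j <= i)%nat -> INR k < kk eps (S i)) ->
  truncM2 eps p0 k <= Cst * inv_sq_sum j.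
Proof.
intros Hbig.
set (w := fun i => indic (kk eps (S i) <= INR k)).
destruct (cv_Cst_inv_sq_weighted w) as [l Hl]; [intros; apply indic_bounds|].
assert (Etrunc : truncM2 eps p0 k = l).
{ unfold truncM2, Expect. apply Lim_cv.
  apply Un_cv_ext with (un := fun m => 0 + sum_f_R0 (fun i => Cst / INR (S i) ^ 2 * w i) m).
  - intros m. unfold mu0, sigma1.
    rewrite expect_partial_even by (intros; rewrite !Rminus_0_r, Rabs_Ropp; reflexivity).
    rewrite !Rminus_0_r, Rabs_R0. f_equal; [ring|]. apply sum_eq. intros i _.
    assert (T := kk_gt1 eps (S i)). assert (T2 := INR_S_pos i).
    rewrite Rminus_0_r, Rabs_pos_eq, Rmult_1_l by lra.
    unfold w. field. split; lra.
  - rewrite <- (Rplus_0_l l). apply CV_plus; [apply Un_cv_const | exact Hl]. }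
rewrite Etrunc.
eapply Rle_cv_lim; [intros m | exact Hl | apply Un_cv_const]. cbv beta.
rewrite sum_f_R0_rsum. unfold inv_sq_sum. rewrite <- rsumZ.
apply rsum_le_trunc.
- intros i. unfold w. assert (T := indic_bounds (kk eps (S i) <= INR k)).
  assert (T2 := Cst_inv_sq_pos i). rewrite S_INR in *. nra.
- intros i Hi. unfold w. rewrite indic_false; [ring|].
  specialize (Hbig i Hi). lra.
Qed.

Lemma truncM2_le p0 N k : (2 <= N)%nat -> (k <= N)%nat ->
  truncM2 eps p0 k <= 1 - Cst / (2 * (kk_inv (INR N) + 1)).
Proof.
intros HN Hk. assert (C := Cst_pos).
assert (HN1 : 1 < INR N) by (apply le_INR in HN; simpl in HN; lra).
assert (HkN : INR k <= INR N) by (apply le_INR, Hk).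
destruct (nat_floor (kk_inv (INR N))) as [j [Hj1 Hj2]]; [left; apply kk_inv_pos|].
assert (Htrunc : truncM2 eps p0 k <= Cst * inv_sq_sum j).
{ apply truncM2_le_partial. intros i Hi.
  assert (INR (S j) <= INR (S i)) by (apply le_INR; lia). rewrite S_INR in H.
  assert (T := lt_kk_of_kk_inv_lt (INR N) (S i) HN1 ltac:(lra)). lra. }
assert (T := Cst_inv_sq_sum_add_tail_le j).
assert (Cst / (2 * (kk_inv (INR N) + 1)) <= Cst / (2 * (INR j + 1))).
{ unfold Rdiv. apply Rmult_le_compat_l; [lra|].
  assert (0 <= INR j) by apply pos_INR. apply Rinv_le_contravar; lra. }
lra.
Qed.

Lemma Qn_ge p0 N : (2 <= N)%nat ->
  Cst / (2 * (kk_inv (INR N) + 1)) * ln (INR N) <= Qn eps p0 N.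
Proof.
intros HN. set (c := Cst / (2 * (kk_inv (INR N) + 1))).
assert (Hc : 0 < c).
{ apply Rdiv_lt_0_compat; [apply Cst_pos | assert (T := kk_inv_pos (INR N)); lra]. }
apply Rle_trans with (c * harmonic (pred N)).
- apply Rmult_le_compat_l; [lra|]. eapply Rle_trans; [|apply ln_le_harmonic].
  apply ln_le; [apply lt_0_INR; lia|].
  replace (INR N) with (INR (S (pred N))) by (f_equal; lia). rewrite S_INR. lra.
- unfold harmonic, Qn, sigma1. rewrite scal_sum. apply sum_Rle. intros i Hi.
  assert (T := truncM2_le p0 N (S i) HN ltac:(lia)). fold c in T.
  assert (0 < / INR (S i)) by apply Rinv_0_lt_compat, INR_S_pos.
  rewrite pow1. nra.
Qed.

Lemma Qn_div_sqrt_ln_ge p0 N : (3 <= N)%nat ->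
  Cst / 4 * Rpower (ln (INR N)) (/ 2 - / (2 + eps)) <= Qn eps p0 N / sqrt (ln (INR N)).
Proof.
intros HN. assert (C := Cst_pos).
set (u := ln (INR N)).
assert (Hu : 1 <= u).
{ rewrite <- (ln_exp 1). apply ln_le; [apply exp_pos|].
  assert (T := exp_le_3). apply le_INR in HN. simpl in HN. lra. }
set (T := kk_inv (INR N)). set (W := Rpower u (/ 2 - / (2 + eps))).
assert (HT : 1 <= T).
{ unfold T, kk_inv. fold u. rewrite <- (Rpower_O u) by lra. apply Rle_Rpower; auto.
  left; apply Rinv_0_lt_compat; lra. }
assert (HW : 0 < W) by apply exp_pos.
assert (Hsqrt : sqrt u = T * W).
{ unfold T, W, kk_inv. fold u. rewrite <- Rpower_plus, <- Rpower_sqrt by lra. f_equal. ring. }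
assert (HQ := Qn_ge p0 N ltac:(lia)). fold u T in HQ.
apply Rle_trans with (Cst / (2 * (T + 1)) * u / sqrt u).
- replace (Cst / (2 * (T + 1)) * u / sqrt u) with (Cst * W * (T / (2 * (T + 1)))).
  + replace (Cst / 4 * W) with (Cst * W * / 4) by field.
    apply Rmult_le_compat_l; [nra|].
    apply Rmult_le_reg_r with (4 * (2 * (T + 1))); [lra|]. field_simplify; lra.
  + rewrite <- (sqrt_sqrt u) at 1 by lra. rewrite Hsqrt. field. split; lra.
- unfold Rdiv at 2 3. apply Rmult_le_compat_r; [|exact HQ].
  left; apply Rinv_0_lt_compat. rewrite Hsqrt. nra.
Qed.

Lemma Qn_limsup p0 M N : exists n, (N <= n)%nat /\ M < Qn eps p0 n / sqrt (ln (INR n)).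
Proof.
assert (C := Cst_pos).
assert (Hexp : 0 < / 2 - / (2 + eps)).
{ assert (/ (2 + eps) < / 2) by (apply Rinv_lt_contravar; nra). lra. }
destruct (Rpower_ln_unbounded _ (4 * M / Cst) (Nat.max N 3) Hexp) as [n [Hn HM]].
exists n. split; [lia|].
eapply Rlt_le_trans; [|apply Qn_div_sqrt_ln_ge; lia].
apply Rmult_lt_compat_l with (r := Cst / 4) in HM; [|lra].
replace (Cst / 4 * (4 * M / Cst)) with M in HM by (field; lra). exact HM.
Qed.

Lemma bn_sub_btn p0 f0 f2 n :
  bn eps p0 f0 f2 n - btn f0 f2 n = f2 / 2 * (harmonic (pred n) - ln (INR n) - Qn eps p0 n).
Proof.
unfold bn, btn, Qn, harmonic, sigma1.
replace (sum_f_R0 (fun i => / INR (S i) * truncM2 eps p0 (S i)) (pred n))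
  with (sum_f_R0 (fun i => / INR (S i)) (pred n)
        - sum_f_R0 (fun i => / INR (S i) * (1 ^ 2 - truncM2 eps p0 (S i))) (pred n)).
- field.
- rewrite <- minus_sum. apply sum_eq. intros; ring.
Qed.

Lemma bn_sub_btn_not_small p0 f0 f2 : f2 <> 0 ->
  ~ Un_cv (fun n => (bn eps p0 f0 f2 n - btn f0 f2 n) / sqrt (ln (INR n))) 0.
Proof.
intros Hf2 Hcv.
assert (Ha : 0 < Rabs f2 / 2) by (assert (0 < Rabs f2) by (apply Rabs_pos_lt; auto); lra).
destruct (Hcv _ Ha) as [N1 HN1].
destruct (Qn_limsup p0 2 (Nat.max N1 3)) as [n [Hn HQ]].
specialize (HN1 n ltac:(lia)). unfold Rdist in HN1. rewrite Rminus_0_r, bn_sub_btn in HN1.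
set (u := ln (INR n)) in *.
assert (Hu : 1 <= u).
{ rewrite <- (ln_exp 1). apply ln_le; [apply exp_pos|].
  assert (T := exp_le_3). assert (INR 3 <= INR n) by (apply le_INR; lia). simpl in H. lra. }
assert (Hs1 : 1 <= sqrt u) by (rewrite <- sqrt_1; apply sqrt_le_1_alt; lra).
assert (HH : harmonic (pred n) - u <= 1).
{ assert (T := harmonic_le (pred n)).
  replace (INR (pred n) + 1) with (INR n) in T by (rewrite <- S_INR; f_equal; lia). fold u in T. lra. }
replace (f2 / 2 * (harmonic (pred n) - u - Qn eps p0 n) / sqrt u)
  with (f2 / 2 * ((harmonic (pred n) - u) / sqrt u - Qn eps p0 n / sqrt u)) in HN1 by (field; lra).
assert (Hx : (harmonic (pred n) - u) / sqrt u <= 1).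
{ apply Rmult_le_reg_r with (sqrt u); [lra|]. unfold Rdiv.
  rewrite Rmult_assoc, Rinv_l by lra. lra. }
assert (1 < Rabs ((harmonic (pred n) - u) / sqrt u - Qn eps p0 n / sqrt u))
  by (rewrite Rabs_left; lra).
rewrite Rabs_mult in HN1.
replace (Rabs (f2 / 2)) with (Rabs f2 / 2) in HN1.
- nra.
- unfold Rdiv. rewrite Rabs_mult, Rabs_inv, (Rabs_pos_eq 2) by lra. reflexivity.
Qed.

End Distribution.

Theorem mainTheorem3 (eps p0 : R) (heps : 0 < eps)
  (hp0 : infinite_sum (fun i => Cst / (kk eps (S i) ^ 2 * INR (S i) ^ 2)) (1 - p0)) :
  0 <= p0 /\
  Integrable eps p0 (fun x => x) /\ Expect eps p0 (fun x => x) = 0 /\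
  Integrable eps p0 (fun x => (x - Expect eps p0 (fun y => y)) ^ 2) /\
  Expect eps p0 (fun x => (x - Expect eps p0 (fun y => y)) ^ 2) = 1 /\
  ExpectInfinite eps p0 (fun x => x ^ 2 * sqrt (logplus (Rabs x))) /\
  (forall M : R, forall N : nat, exists n : nat, (N <= n)%nat /\
      M < Qn eps p0 n / sqrt (ln (INR n))) /\
  (forall (f f' : R -> R) (f2 : R),
      (forall x, derivable_pt_lim f x (f' x)) ->
      derivable_pt_lim f' mu0 f2 -> f2 <> 0 ->
      ~ Un_cv (fun n => (bn eps p0 (f mu0) f2 n - btn (f mu0) f2 n) / sqrt (ln (INR n))) 0).
Proof.
rewrite Expect_id.
split; [exact (p0_ge0 eps p0 hp0)|].
split; [apply integrable_id|].
split; [reflexivity|].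
split.
{ exists 1. apply cv_expect_partial_sq. intros x.
  rewrite Rminus_0_r. apply Rabs_pos_eq, pow2_ge_0. }
split; [apply Lim_cv, cv_expect_partial_sq; intros x; ring|].
split; [exact (ExpectInfinite_sq_sqrt_logplus eps heps p0)|].
split; [exact (Qn_limsup eps heps p0)|].
(* b_n and b~_n only involve f(mu) and f''(mu). *)
intros f f' f2 _ _. exact (bn_sub_btn_not_small eps heps p0 (f mu0) f2).
Qed.
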